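(* The map $f \mapsto C^{\wedge}(f)$, defined on the set $\mathbb{N}_0[\mathbb{R} \times \mathbb{R}_{>0}]$ of barcodes, is one-to-one.
   Context: A barcode is a finite formal sum $f = \sum_{i=1}^n x^{\alpha_i}y^{\ell_i}$ with $n\ge 0$, $\alpha_i \in \mathbb{R}$, $\ell_i \in \mathbb{R}_{>0}$ (i.e. a finite multiset of pairs $(\alpha_i,\ell_i)$, written as an element of the monoid semiring $\mathbb{N}_0[\mathbb{R}\times\mathbb{R}_{>0}]$ with indeterminates $x,y$ and real exponents). Its $p$-th exterior power ($p\ge1$) is the barcode $f^{\wedge p} = \sum_{1\le i_1<\cdots<i_p\le n} x^{\alpha_{i_1}+\cdots+\alpha_{i_p}}y^{\min\{\ell_{i_1},\ldots,\ell_{i_p}\}}$ (zero if $p>n$). Set $B(f) = \sum_i x^{\alpha_i}$, $D(f) = \sum_i x^{\alpha_i+\ell_i}$, and the critical series $C(f) = B(f)-D(f) \in \mathbb{Z}[\mathbb{R}]$ (finite integer combinations of $x^g$, $g\in\mathbb{R}$). The exterior critical series of $f$ is $C^{\wedge}(f) = \sum_{p=1}^{\infty} C(f^{\wedge p})z^p$, with $z$ a further indeterminate (a finite sum). *)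

From HB Require Import structures.
From mathcomp Require Import all_boot all_order all_algebra.
From mathcomp Require Import reals.
Set Implicit Arguments. Unset Strict Implicit. Unset Printing Implicit Defensive.
Import Order.TTheory GRing.Theory Num.Theory.
Local Open Scope ring_scope.

(* A barcode  f = sum_i x^{alpha_i} y^{ell_i}  is a finite multiset of pairs
   (alpha_i, ell_i); we represent it by a list [s], two lists denoting the same
   barcode iff they are permutations of each other ([perm_eq]). *)
Definition is_barcode {R : realType} (s : seq (R * R)) : bool :=
  all (fun a => 0 < a.2) s.

(* p-th exterior power: the list of (alpha_{i_1}+...+alpha_{i_p},
   min(ell_{i_1},...,ell_{i_p})) over all index tuples i_1 < ... < i_p,
   enumerated recursively (either the first bar is used or it is not). *)
Fixpoint wedge {R : realType} (s : seq (R * R)) (p : nat) : seq (R * R) :=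
  match s with
  | [::] => [::]
  | x :: s' =>
    match p with
    | 0 => [::]
    | 1 => x :: wedge s' 1
    | S p' => [seq (x.1 + y.1, Num.min x.2 y.2) | y <- wedge s' p'] ++ wedge s' p
    end
  end.

(* Critical series C(f) = B(f) - D(f) in Z[R], given by its coefficient
   function g |-> (coefficient of x^g). *)
Definition crit {R : realType} (s : seq (R * R)) (g : R) : int :=
  (count (fun a => a.1 == g) s)%:Z - (count (fun a => a.1 + a.2 == g) s)%:Z.

(* Exterior critical series: coefficient of z^p x^g; the z^0 coefficient is 0. *)
Definition ext_crit {R : realType} (s : seq (R * R)) (p : nat) (g : R) : int :=
  if p == 0%N then 0 else crit (wedge s p) g.

From mathcomp Require Import all_boot all_order all_algebra.
From mathcomp Require Import reals.
From mathcomp Require Import zify ring lra.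
Set Implicit Arguments. Unset Strict Implicit. Unset Printing Implicit Defensive.
Import Order.TTheory GRing.Theory Num.Theory.
Local Open Scope ring_scope.

(* Sort the bars by decreasing length, so that in every wedge product the last
   bar carries the minimal length.  Specializing the exterior critical series
   at [z = - x^(-b)] then gives an element S(s) of Z[R] obeying
     S(x :: s) = (1 - x^c) S(s) - x^c (1 - x^(x.2)),   c = x.1 - b,
   so that T(s) := S(s) + 1 - x^L satisfies
     T(x :: s) = (1 - x^c) T(s) + x^c (x^(x.2) - x^L).
   If (b, L) is a longest bar of f, listed first, then T(f) = 0 because
   c = 0 and x.2 = L in the first step.  If g has the same exterior critical series, T(g) = 0 as well.  The
   first moment of T(x :: s) is x.2 - L, so the longest bar of g has length L;
   if its birth differs from b, then T of the remaining bars is invariant under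
   a nonzero shift, hence zero, and we descend until (b, L) is found in g.
   Removing (b, L) from f and g preserves the exterior critical series, and we
   conclude by induction. *)

Section ExteriorPowers.
Context {R : realType}.
Implicit Types (s t : seq (R * R)) (x y : R * R).

Definition ge_len x y := y.2 <= x.2.

Lemma ge_len_trans : transitive ge_len.
Proof. by move=> y x z xy yz; apply: le_trans yz xy. Qed.

Lemma ge_len_total : total ge_len.
Proof. by move=> x y; apply: le_total. Qed.

Definition wedge_bar x y : R * R := (x.1 + y.1, Num.min x.2 y.2).

Lemma wedge_bar_left_comm x y z :
  wedge_bar x (wedge_bar y z) = wedge_bar y (wedge_bar x z).
Proof. by rewrite /wedge_bar /= addrCA minCA. Qed.

Lemma wedge_barC x y : wedge_bar x y = wedge_bar y x.
Proof. by rewrite /wedge_bar addrC minC. Qed.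

Lemma wedge1 s : wedge s 1 = s.
Proof. by elim: s => //= x s ->. Qed.

Lemma wedge_consS x s p :
  wedge (x :: s) p.+2 = map (wedge_bar x) (wedge s p.+1) ++ wedge s p.+2.
Proof. by []. Qed.

Lemma wedge_oversize s p : (size s < p)%N -> wedge s p = [::].
Proof. by elim: s p => [|x s IH] [|[|p]] //= ?; rewrite !IH //; lia. Qed.

Lemma perm_wedge_cons x s t : (forall p, perm_eq (wedge s p) (wedge t p)) ->
  forall p, perm_eq (wedge (x :: s) p) (wedge (x :: t) p).
Proof. by move=> st [|[|p]] //=; rewrite ?perm_cons ?perm_cat ?perm_map. Qed.

Lemma perm_wedge_swap x y s p :
  perm_eq (wedge (x :: y :: s) p) (wedge (y :: x :: s) p).
Proof.
case: p => [|[|[|p]]]; rewrite ?wedge_consS //=.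
- by rewrite -[x :: y :: _]/([:: x] ++ [:: y] ++ _) perm_catCA.
- by rewrite wedge_barC perm_cons perm_catCA.
rewrite !map_cat -!map_comp -!catA (eq_map (wedge_bar_left_comm x y)).
by rewrite perm_cat2l perm_catCA.
Qed.

Lemma perm_wedge s t : perm_eq s t -> forall p, perm_eq (wedge s p) (wedge t p).
Proof.
elim: s t => [|x s IH] t; first by rewrite perm_sym => /perm_nilP ->.
move=> st p; have xt : x \in t by rewrite -(perm_mem st) mem_head.
case/splitPr: xt st => t1 t2.
rewrite perm_sym -(cat1s x t2) perm_catCA perm_cons perm_sym => /IH st.
have ins u q : perm_eq (wedge (x :: u ++ t2) q) (wedge (u ++ x :: t2) q).
  elim: u q => // y u IHu q.
  rewrite !cat_cons.
  exact: perm_trans (perm_wedge_swap _ _ _ _) (perm_wedge_cons _ IHu q).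
by rewrite cat1s; exact: perm_trans (perm_wedge_cons _ st p) (ins t1 p).
Qed.

Lemma wedge_ge_len z s p : all (ge_len z) s -> all (ge_len z) (wedge s p).
Proof.
elim: s p => [|x s IH] [|[|p]] //= /andP[xz sz]; first by rewrite xz IH.
rewrite all_cat IH // andbT all_map.
by apply/allP => y /(allP (IH _ sz)) yz; rewrite /ge_len /= ge_min -/(ge_len z x) xz.
Qed.

Lemma crit_cat s t h : crit (s ++ t) h = crit s h + crit t h.
Proof. by rewrite /crit !count_cat !PoszD; ring. Qed.

Lemma crit_map_wedge_bar x s h : all (ge_len x) s ->
  crit (map (wedge_bar x) s) h = crit s (h - x.1).
Proof.
move=> sx; rewrite /crit !count_map.
have eqsub a : (x.1 + a == h) = (a == h - x.1).
  by rewrite [RHS]eq_sym subr_eq eq_sym addrC.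
congr (Posz _ - Posz _); apply: eq_in_count => y /=.
  by rewrite eqsub.
by move=> /(allP sx) yx; rewrite (min_r yx) -addrA eqsub.
Qed.

Lemma perm_crit s t : perm_eq s t -> crit s =1 crit t.
Proof. by move=> /permP st h; rewrite /crit !st. Qed.

Lemma perm_ext_crit s t : perm_eq s t -> ext_crit s =2 ext_crit t.
Proof. by move=> st [|p] h //; apply/perm_crit/perm_wedge. Qed.

Lemma ext_crit0 s h : ext_crit s 0 h = 0.
Proof. by []. Qed.

Lemma ext_crit_oversize s p h : (size s < p)%N -> ext_crit s p h = 0.
Proof. by case: p => // p sp; rewrite /ext_crit /= wedge_oversize. Qed.

(* Wedging with a bar at least as long as all others only shifts births,
   since then [min x.2 y.2 = y.2]. *)
Lemma ext_crit_cons x s p h : all (ge_len x) s ->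
  ext_crit (x :: s) p.+1 h =
    ext_crit s p.+1 h + ext_crit s p (h - x.1) + (if p is 0 then crit [:: x] h else 0).
Proof.
move=> sx; case: p => [|p]; rewrite /ext_crit ?wedge_consS /=.
  by rewrite wedge1 -cat1s crit_cat addr0 addrC.
by rewrite crit_cat crit_map_wedge_bar ?wedge_ge_len // addr0 addrC.
Qed.

Lemma ext_crit_consK x s t :
  all (ge_len x) s -> all (ge_len x) t ->
  ext_crit (x :: s) =2 ext_crit (x :: t) -> ext_crit s =2 ext_crit t.
Proof.
move=> sx tx st; elim=> // p IHp h.
by have := st p.+1 h; rewrite !ext_crit_cons // IHp => /addIr/addIr.
Qed.

End ExteriorPowers.

Section FormalSums.
Context {R : realType}.
Implicit Types (w : seq (R * int)) (c h : R).

(* A list [w] of pairs [(g, n)] stands for the element [sum n x^g] of Z[R]. *)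
Definition coef w h : int := \sum_(e <- w | e.1 == h) e.2.
Definition mass w : int := \sum_(e <- w) e.2.
Definition moment w : R := \sum_(e <- w) e.1 * e.2%:~R.

Definition shiftN c w := [seq (e.1 + c, - e.2) | e <- w].

Lemma coef_nil h : coef [::] h = 0.
Proof. by rewrite /coef big_nil. Qed.

Lemma coef_cons e w h : coef (e :: w) h = (e.1 == h)%:Z * e.2 + coef w h.
Proof. by rewrite /coef big_cons; case: eqP; rewrite ?mul1r ?mul0r ?add0r. Qed.

Lemma coef_cat w1 w2 h : coef (w1 ++ w2) h = coef w1 h + coef w2 h.
Proof. by rewrite /coef big_cat. Qed.

Lemma coef_shiftN c w h : coef (shiftN c w) h = - coef w (h - c).
Proof.
rewrite /coef big_map -sumrN !(big_mkcond (fun e => _ == _)) /=.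
by apply: eq_bigr => e _; rewrite [e.1 == _]eq_sym subr_eq eq_sym.
Qed.

Lemma mass_cat w1 w2 : mass (w1 ++ w2) = mass w1 + mass w2.
Proof. by rewrite /mass big_cat. Qed.

Lemma mass_shiftN c w : mass (shiftN c w) = - mass w.
Proof. by rewrite /mass big_map -sumrN. Qed.

Lemma moment_cat w1 w2 : moment (w1 ++ w2) = moment w1 + moment w2.
Proof. by rewrite /moment big_cat. Qed.

Lemma moment_shiftN c w : moment (shiftN c w) = - moment w - c * (mass w)%:~R.
Proof.
rewrite /moment /mass big_map rmorph_sum mulr_sumr -sumrN -sumrB.
by apply: eq_bigr => e _ /=; rewrite intrN mulrN mulrDl opprD.
Qed.

Lemma moment_coef w (U : seq R) : uniq U -> {subset map fst w <= U} ->
  moment w = \sum_(g <- U) g * (coef w g)%:~R.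
Proof.
move=> uU wU; rewrite /moment /coef.
transitivity (\sum_(e <- w) \sum_(g <- U) if e.1 == g then g * e.2%:~R else 0).
  apply: eq_big_seq => e ew; rewrite (bigD1_seq e.1) ?wU ?map_f //= eqxx.
  by rewrite big1 ?addr0 // => g; rewrite eq_sym => /negbTE ->.
rewrite exchange_big; apply: eq_bigr => g _.
by rewrite rmorph_sum mulr_sumr [RHS]big_mkcond.
Qed.

Lemma eq_moment w1 w2 : coef w1 =1 coef w2 -> moment w1 = moment w2.
Proof.
move=> w12; set U := undup (map fst (w1 ++ w2)).
have uU : uniq U := undup_uniq _.
rewrite (moment_coef uU) ?(moment_coef uU) => [|g|g]; last 2 first.
- by rewrite mem_undup map_cat mem_cat => ->; rewrite orbT.
- by rewrite mem_undup map_cat mem_cat => ->.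
by apply: eq_bigr => g _; rewrite w12.
Qed.

Lemma coef_periodic w c : c != 0 -> (forall h, coef w h = coef w (h - c)) ->
  forall h, coef w h = 0.
Proof.
move=> c0 per h; apply/eqP; apply: contraT => wh.
have orbit k : coef w (h + k%:R * c) = coef w h.
  elim: k => [|k IHk]; first by rewrite mul0r addr0.
  by rewrite per -IHk mulrSr mulrDl mul1r addrA addrK.
pose K := [seq h + k%:R * c | k <- iota 0 (size w).+1].
have uK : uniq K.
  rewrite map_inj_uniq ?iota_uniq // => i j /addrI /(mulIf c0) /eqP.
  by rewrite eqr_nat => /eqP.
have Kw : {subset K <= map fst w}.
  move=> g /mapP[k _ ->]; apply: contraT => kw; move: wh.
  rewrite -(orbit k) /coef big1_seq ?eqxx // => e /andP[/eqP e1 ew].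
  by rewrite -e1 map_f in kw.
by have := uniq_leq_size uK Kw; rewrite !size_map size_iota ltnn.
Qed.

End FormalSums.

Section AlternatingSpecialization.
Context {R : realType}.
Variable b : R.
Implicit Types (s : seq (R * R)) (x : R * R) (h L : R).

(* The coefficient of [x^h] in the exterior critical series specialized at
   [z = - x^(-b)], truncated to the powers [z^p] with [p < N]. *)
Definition alt_crit N s h : int :=
  \sum_(0 <= p < N) (-1) ^+ p * ext_crit s p (h + p%:R * b).

Lemma alt_crit_oversize N s h : (size s < N)%N ->
  alt_crit N.+1 s h = alt_crit N s h.
Proof.
by move=> sN; rewrite /alt_crit big_nat_recr //= ext_crit_oversize // mulr0 addr0.
Qed.

Lemma alt_crit_cons N x s h : all (ge_len x) s -> ((size s).+1 < N)%N ->
  alt_crit N (x :: s) h =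
    alt_crit N s h - alt_crit N s (h - (x.1 - b)) - crit [:: x] (h + b).
Proof.
case: N => // N sx sN; rewrite [alt_crit N.+1 s (h - _)]alt_crit_oversize; last by lia.
rewrite /alt_crit !big_nat_recl // !ext_crit0 !mulr0 !add0r.
under eq_bigr => p _ do rewrite ext_crit_cons // mulrDr mulrDr.
rewrite !big_split; congr (_ + _ + _).
  rewrite -sumrN; apply: eq_bigr => p _; rewrite exprS mulN1r mulNr.
  by congr (- (_ * _)); congr (ext_crit _ _ _); rewrite -natr1 mulrDl mul1r; ring.
case: N sN => // N _; rewrite big_nat_recl // big1 => [|p _]; last by rewrite mulr0.
by rewrite /= addr0 expr1 mulN1r mul1r.
Qed.

Lemma crit1 x h : crit [:: x] h = (x.1 == h)%:Z - (x.1 + x.2 == h)%:Z.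
Proof. by rewrite /crit /= !addn0. Qed.

(* T(s) of the header, as a list; see [coef_alt_series]. *)
Fixpoint alt_series L s : seq (R * int) :=
  if s is x :: s' then
    alt_series L s' ++ shiftN (x.1 - b) (alt_series L s' ++ [:: (L, 1); (x.2, -1)])
  else [:: (0, 1); (L, -1)].

Lemma coef_alt_series_cons L x s h :
  coef (alt_series L (x :: s)) h = coef (alt_series L s) h
    - coef (alt_series L s) (h - (x.1 - b))
    - (L == h - (x.1 - b))%:Z + (x.2 == h - (x.1 - b))%:Z.
Proof. by rewrite /= coef_cat coef_shiftN !coef_cat !coef_cons coef_nil /=; ring. Qed.

Lemma coef_alt_series N L s h : sorted ge_len s -> ((size s).+1 < N)%N ->
  coef (alt_series L s) h = alt_crit N s h + (0 == h)%:Z - (L == h)%:Z.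
Proof.
elim: s h => [|x s IH] h.
  rewrite /alt_crit big1 => [_ _|[|p] _ //]; last by rewrite ext_crit_oversize ?mulr0.
  by rewrite /= !coef_cons coef_nil; case: (0 == h); case: (L == h).
rewrite /= path_sortedE => [/andP[sx ss] /ltnW sN|]; last exact: ge_len_trans.
rewrite coef_alt_series_cons !IH // alt_crit_cons // crit1.
have -> : (x.1 == h + b) = (0 == h - (x.1 - b)) by apply/eqP/eqP; lra.
have -> : (x.1 + x.2 == h + b) = (x.2 == h - (x.1 - b)) by apply/eqP/eqP; lra.
ring.
Qed.

Lemma mass_alt_series L s : mass (alt_series L s) = 0.
Proof.
case: s => [|x s] /=; first by rewrite /mass !big_cons big_nil.
rewrite mass_cat mass_shiftN mass_cat.
have -> : mass [:: (L, 1); (x.2, -1)] = 0 by rewrite /mass !big_cons big_nil /=; ring.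
by rewrite addr0 subrr.
Qed.

Lemma moment_alt_series_nil L : moment (alt_series L [::]) = - L.
Proof. by rewrite /moment !big_cons big_nil /=; ring. Qed.

Lemma moment_alt_series_cons L x s : moment (alt_series L (x :: s)) = x.2 - L.
Proof.
rewrite /= moment_cat moment_shiftN -/(alt_series L s) mass_cat mass_alt_series.
by rewrite moment_cat /mass /moment !big_cons !big_nil /=; ring.
Qed.

Lemma mem_alt_series L s : L != 0 -> (forall h, coef (alt_series L s) h = 0) ->
  (b, L) \in s.
Proof.
have moment0 t : (forall h, coef t h = 0) -> moment t = 0.
  move=> t0; rewrite (@eq_moment _ t [::]) => [|h].
  - by rewrite /moment big_nil.
  - by rewrite t0 coef_nil.
move=> L0; elim: s => [|[a l] s IH] s0.
  by move: L0; rewrite -oppr_eq0 -moment_alt_series_nil moment0 ?eqxx.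
have /eqP : moment (alt_series L ((a, l) :: s)) = 0 by exact: moment0.
rewrite moment_alt_series_cons subr_eq0 /= => /eqP lL.
have [-> | ab] := eqVneq a b; first by rewrite lL mem_head.
rewrite in_cons IH ?orbT //; apply: (coef_periodic (c := a - b)).
  by rewrite subr_eq0.
move=> h; have /eqP := s0 h.
by rewrite coef_alt_series_cons /= lL subrK subr_eq0 => /eqP.
Qed.

End AlternatingSpecialization.

Section Injectivity.
Context {R : realType}.
Implicit Types (f g s : seq (R * R)) (z : R * R).

Lemma exists_longest s : s != [::] -> exists2 z, z \in s & all (ge_len z) s.
Proof.
move=> s0; have ps := permEl (perm_sort ge_len s).
case: (sort ge_len s) (sort_sorted ge_len_total s) ps => [|z t] ss ps.
  by move: s0; rewrite perm_sym in ps; rewrite (perm_nilP ps).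
exists z; first by rewrite -(perm_mem ps) mem_head.
rewrite -(perm_all _ ps) /= {1}/ge_len lexx.
by move: ss; rewrite /= path_sortedE => [/andP[]|] //; exact: ge_len_trans.
Qed.

Lemma all_rem (P : pred (R * R)) z s : z \in s -> all P s -> all P (rem z s).
Proof. by move=> /perm_to_rem zs; rewrite (perm_all _ zs) => /andP[]. Qed.

Lemma mem_of_ext_crit b L f g : 0 < L -> (b, L) \in f -> all (ge_len (b, L)) f ->
  ext_crit f =2 ext_crit g -> (b, L) \in g.
Proof.
move=> L0 bf Lf fg; set f2 := (b, L) :: sort ge_len (rem (b, L) f).
set g2 := sort ge_len g; set N := (size f + size g).+2.
have pf : perm_eq f f2.
  by rewrite (perm_trans (perm_to_rem bf)) // perm_cons perm_sym perm_sort.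
have pg : perm_eq g g2 by rewrite perm_sym perm_sort.
have sf : sorted ge_len f2.
  rewrite /= path_sortedE ?sort_sorted ?all_sort ?all_rem ?andbT //.
  - exact: ge_len_total.
  - exact: ge_len_trans.
have f2g2 h : alt_crit b N f2 h = alt_crit b N g2 h.
  by apply: eq_bigr => p _; rewrite -(perm_ext_crit pf) fg (perm_ext_crit pg).
rewrite (perm_mem pg); apply: (mem_alt_series (L := L)); first by rewrite gt_eqF.
have sg : sorted ge_len g2 := sort_sorted ge_len_total g.
move=> h; rewrite (coef_alt_series b L h sg (N := N)); last first.
  by rewrite size_sort !ltnS leq_addl.
rewrite -f2g2 -(coef_alt_series b L h sf); last first.
  by rewrite -(perm_size pf) !ltnS leq_addr.
by rewrite coef_alt_series_cons /= subrr subr0; ring.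
Qed.

Lemma perm_eq_of_ext_crit n f g : (size f + size g <= n)%N ->
  is_barcode f -> is_barcode g -> ext_crit f =2 ext_crit g -> perm_eq f g.
Proof.
elim: n f g => [|n IH] f g.
  by rewrite leqn0 addn_eq0 !size_eq0 => /andP[/eqP -> /eqP ->].
have [|/exists_longest[z zfg zmax]] := eqVneq (f ++ g) [::].
  by case: f g => [|? ?] [|? ?].
wlog zf : f g zfg zmax / z \in f => [wlog_zf|] fgn Bf Bg fg.
  move: (zfg); rewrite mem_cat => /orP[zf|zg]; first exact: wlog_zf.
  rewrite perm_sym; apply: (wlog_zf g f) => //.
  - by rewrite mem_cat zg.
  - by rewrite (perm_all _ (permEl (perm_catC g f))).
  - by rewrite addnC.
have zg : z \in g.
  case: z zfg zmax zf => b L zfg zmax zf; apply: (mem_of_ext_crit _ zf _ fg).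
  - exact: (allP Bf _ zf).
  - by move: zmax; rewrite all_cat => /andP[].
have [zf_max zg_max] : all (ge_len z) f /\ all (ge_len z) g.
  by apply/andP; rewrite -all_cat.
have fg' : ext_crit (rem z f) =2 ext_crit (rem z g).
  apply: (ext_crit_consK (x := z)); rewrite ?all_rem // => p h.
  by rewrite -(perm_ext_crit (perm_to_rem zf)) fg (perm_ext_crit (perm_to_rem zg)).
have /IH fg_rem : (size (rem z f) + size (rem z g) <= n)%N.
  move: fgn; rewrite (perm_size (perm_to_rem zf)) (perm_size (perm_to_rem zg)) /=.
  by rewrite addSn addnS ltnS => /ltnW.
apply: perm_trans (perm_to_rem zf) _; rewrite perm_sym.
apply: perm_trans (perm_to_rem zg) _; rewrite perm_cons perm_sym.
by apply: fg_rem; [exact: all_rem zf Bf | exact: all_rem zg Bg |].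
Qed.

End Injectivity.

Theorem theorem7 (R : realType) (f g : seq (R * R)) :
  is_barcode f -> is_barcode g -> ext_crit f = ext_crit g -> perm_eq f g.
Proof.
move=> Bf Bg fg; apply: (@perm_eq_of_ext_crit _ (size f + size g)) => // p h.
by rewrite fg.
Qed.
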